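(* Let $L\geq1$ be an integer, $P\geq0$, $p_B\in[0,1]$, and $\alpha\sim\mathrm{Binomial}(L,1-p_B)$. For integers $i\geq0$ let $\bar R(i):=\mathbb{E}\big[\log\big(1+|\sum_{l=1}^i e^{j\theta_l}|^2P\big)\big]$ with $\theta_1,\theta_2,\ldots$ i.i.d. $\mathrm{Uniform}(0,2\pi)$, and let $\bar R_{\mathrm{out}}:=\sup_{r\in\mathbb{R}}r\cdot\mathbb{P}(\bar R(\alpha)\geq r)$. Then $$\bar R_{\mathrm{out}}\geq\mathbb{P}(\alpha\geq1)\bar R(1)=(1-p_B^L)\log(1+P).$$
   Context: $\bar R$ is a deterministic function (expectation over the $\theta_l$ only). $\log$ is the logarithm in a fixed base. *)

From HB Require Import structures.
From mathcomp Require Import all_boot all_order all_algebra.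
From mathcomp Require Import all_classical all_reals all_analysis.
Set Implicit Arguments. Unset Strict Implicit. Unset Printing Implicit Defensive.
Import Order.TTheory GRing.Theory Num.Theory.
Local Open Scope classical_set_scope.
Local Open Scope ring_scope.

Definition logb {R : realType} (b x : R) : R := ln x / ln b.

(* F i (x,y) = E[ log_b (1 + |(x + j y) + sum_{l=1}^i e^{j theta_l}|^2 P) ]
   with theta_1..theta_i i.i.d. Uniform(0,2pi); computed as the iterated
   expectation: each step averages over one uniform angle. *)
Fixpoint Fexp {R : realType} (b P : R) (i : nat) (x y : R) : R :=
  match i with
  | 0 => logb b (1 + (x ^+ 2 + y ^+ 2) * P)
  | i'.+1 => (2 * pi)^-1 *
      Rintegral (@lebesgue_measure R) `[0, 2 * pi]
        (fun t : R => Fexp b P i' (x + cos t) (y + sin t))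
  end.

Definition Rbar {R : realType} (b P : R) (i : nat) : R := Fexp b P i 0 0.

Definition binom_pmf {R : realType} (L : nat) (q : R) (k : nat) : R :=
  'C(L, k)%:R * q ^+ k * (1 - q) ^+ (L - k).

Definition prob_rate_ge {R : realType} (b P pB : R) (L : nat) (r : R) : R :=
  \sum_(k < L.+1) binom_pmf L (1 - pB) k * ((r <= Rbar b P k)%R)%:R.

Definition prob_alpha_ge1 {R : realType} (pB : R) (L : nat) : R :=
  \sum_(k < L.+1 | (1 <= k)%N) binom_pmf L (1 - pB) k.

Definition Rout {R : realType} (b P pB : R) (L : nat) : \bar R :=
  ereal_sup [set (r * prob_rate_ge b P pB L r)%:E | r in [set: R]].

(* For |w| < 1 the integral J(w) of ln |1 + w e^{-it}|^2 over a period is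
   nonnegative: shifting t by pi gives J(-w) = J(w), and multiplying the
   integrands for w and -w gives the integrand for -w^2 at 2t, so
   J(w) = J(-w^2) / 2 = ... = J(w_n) / 2^n with |w_n| <= |w|, while J is bounded
   below uniformly on |w| <= |w_0| < 1.  Since
   1 + |z + e^{it}|^2 P = c |1 + (P z / c) e^{-it}|^2 with c >= 1 + |z|^2 P and
   |P z / c| < 1, the circle means of log (1 + |z + e^{it}|^2 P) dominate its
   value at the centre, so each averaging step in the definition of Rbar can
   only increase it: Rbar 1 <= Rbar k for k >= 1.  Taking r = Rbar 1 in the
   supremum defining Rout gives the bound, and P(alpha >= 1) = 1 - pB^L by the
   binomial theorem. *)

From mathcomp Require Import all_boot all_order all_algebra.
From mathcomp Require Import all_classical all_reals all_analysis.
From mathcomp Require Import ring lra.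
Import Order.TTheory GRing.Theory Num.Theory numFieldNormedType.Exports.
Local Open Scope ring_scope.

Section nonneg_integral_monotone.
Context {d} {T : measurableType d} {R : realType}.
Variable mu : {measure set T -> \bar R}.

(* No measurability is needed: the integral of a nonnegative function is a
   supremum over the simple functions below it. *)
Lemma ge0_le_integral_nonmeasurable (D : set T) (f g : T -> \bar R) :
  (forall x, D x -> (0 <= f x)%E) -> (forall x, D x -> (f x <= g x)%E) ->
  (\int[mu]_(x in D) f x <= \int[mu]_(x in D) g x)%E.
Proof.
move=> f0 fg.
have g0 x : D x -> (0 <= g x)%E by move=> Dx; exact: le_trans (f0 _ Dx) (fg _ Dx).
rewrite !ge0_integralE //; apply: ereal_sup_le => _ [h hf <-]; exists h => //= x.
apply: le_trans (hf x) _; rewrite /patch; case: ifPn => // /set_mem; exact: fg.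
Qed.

Variable D : set T.
Hypotheses (mD : measurable D) (muD : (mu D < +oo)%E).

Lemma bounded_ge0_integral_fin_num (f : T -> R) (M : R) :
  (forall x, D x -> 0 <= f x <= M) -> (\int[mu]_(x in D) (f x)%:E)%E \is a fin_num.
Proof.
move=> fM; rewrite ge0_fin_numE; last first.
  by apply: integral_ge0 => x /fM /andP[f0 _]; rewrite lee_fin.
apply: (@le_lt_trans _ _ (\int[mu]_(x in D) (cst M%:E) x)%E).
  by apply: ge0_le_integral_nonmeasurable => x /fM /andP[f0 fMx]; rewrite lee_fin.
by rewrite integral_cst // ltey_eq fin_numM // ge0_fin_numE.
Qed.

Lemma bounded_ge0_le_Rintegral (f g : T -> R) (M : R) :
  (forall x, D x -> 0 <= f x) -> (forall x, D x -> f x <= g x) ->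
  (forall x, D x -> g x <= M) ->
  \int[mu]_(x in D) f x <= \int[mu]_(x in D) g x.
Proof.
move=> f0 fg gM.
have fM x : D x -> 0 <= f x <= M by move=> Dx; rewrite f0 //= (le_trans (fg _ Dx)) ?gM.
have gM' x : D x -> 0 <= g x <= M by move=> Dx; rewrite gM // andbT (le_trans (f0 _ Dx)) ?fg.
rewrite /Rintegral fine_le //; [exact: bounded_ge0_integral_fin_num fM
  | exact: bounded_ge0_integral_fin_num gM' |].
by apply: ge0_le_integral_nonmeasurable => x Dx; rewrite lee_fin ?f0 ?fg.
Qed.

Lemma bounded_ge0_Rintegral_le (g : T -> R) (M : R) :
  (forall x, D x -> 0 <= g x) -> (forall x, D x -> g x <= M) ->
  \int[mu]_(x in D) g x <= M * fine (mu D).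
Proof.
move=> g0 gM; rewrite -Rintegral_cst //.
by apply: (@bounded_ge0_le_Rintegral _ _ M) => // x Dx; rewrite ?g0 ?gM.
Qed.

End nonneg_integral_monotone.

Section continuous_fun.
Context {K : numFieldType} {T : topologicalType}.
Implicit Types f g : T -> K.

Lemma continuousD_fun f g : continuous f -> continuous g ->
  continuous (fun x => f x + g x).
Proof. by move=> cf cg x; exact: (@continuousD _ _ _ f g x (cf x) (cg x)). Qed.

Lemma continuousM_fun f g : continuous f -> continuous g ->
  continuous (fun x => f x * g x).
Proof. by move=> cf cg x; exact: (@continuousM _ _ f g x (cf x) (cg x)). Qed.

End continuous_fun.

Section continuous_Rintegral_itv.
Context {R : realType}.
Notation mu := (@lebesgue_measure R).
Local Open Scope classical_set_scope.
Implicit Types (g : R -> R) (a b c k : R).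

Lemma fine_lebesgue_measure_itv a b : a <= b -> fine (mu `[a, b]) = b - a.
Proof.
move=> ab; rewrite lebesgue_measure_itv /= lte_fin.
by case: ltgtP ab => // -> _; rewrite subrr.
Qed.

Lemma continuous_integrable_itv g a b :
  continuous g -> mu.-integrable `[a, b] (EFin \o g).
Proof.
move=> cg; apply: continuous_compact_integrable; first exact: segment_compact.
exact: continuous_subspaceT.
Qed.

Let continuous_affine k c : continuous (fun x : R => k * x + c).
Proof.
apply: continuousD_fun => [|x]; last exact: cvg_cst.
by apply: continuousM_fun => x; [exact: cvg_cst | exact: cvg_id].
Qed.

Lemma continuous_comp_affine g k c : continuous g ->
  continuous (fun x => g (k * x + c)).
Proof. by move=> cg x; apply: continuous_comp; [exact: continuous_affine | exact: cg]. Qed.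

Let derive1_affine k c : (fun x : R => k * x + c)^`() = cst k.
Proof.
apply/funext => x; rewrite derive1E.
have dkc : is_derive x 1 (fun x : R => k * x + c) (k * 1 + 0) by apply: is_deriveD.
by rewrite derive_val mulr1 addr0.
Qed.

Lemma Rintegral_itv_affine g k c a b : 0 < k -> a <= b -> continuous g ->
  \int[mu]_(x in `[k * a + c, k * b + c]) g x =
  \int[mu]_(x in `[a, b]) (g (k * x + c) * k).
Proof.
move=> k0 ab cg; rewrite /Rintegral.
rewrite (@integration_by_substitution_increasing R (fun x => k * x + c) g a b) //.
- by congr fine; apply: eq_integral => x _; rewrite derive1_affine.
- by move=> x y _ _ xy; rewrite ltrD2r ltr_pM2l.
- by rewrite derive1_affine => x _; exact: cvg_cst.
- by rewrite derive1_affine; exact: is_cvg_cst.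
- by rewrite derive1_affine; exact: is_cvg_cst.
- split; [|exact/cvg_at_right_filter/continuous_affine
           |exact/cvg_at_left_filter/continuous_affine].
  by move=> x _; apply: derivableD => //; apply: derivableM => //; exact: derivable_id.
- exact: continuous_subspaceT.
Qed.

Lemma Rintegral_itv_split g a b c : a <= b -> b <= c -> continuous g ->
  \int[mu]_(x in `[a, c]) g x =
  \int[mu]_(x in `[a, b]) g x + \int[mu]_(x in `[b, c]) g x.
Proof.
move=> ab bc cg.
have := @Rintegral_itvB R g (BLeft a) (BRight c) b (continuous_integrable_itv g a c cg).
rewrite !bnd_simp => /(_ ab bc) split_ac.
rewrite -[X in _ = _ + X]Rintegral_itv_obnd_cbnd -?split_ac ?subrKC //.
apply: integrableS (continuous_integrable_itv g b c cg) => //.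
by move=> x /=; rewrite !in_itv /= => /andP[/ltW -> ->].
Qed.

Lemma Rintegral_itv_periodic g T c : continuous g -> periodic g T ->
  0 <= c <= T -> \int[mu]_(x in `[c, c + T]) g x = \int[mu]_(x in `[0, T]) g x.
Proof.
move=> cg gT /andP[c0 cT].
rewrite (@Rintegral_itv_split g c T) ?lerDr //.
have := @Rintegral_itv_affine g 1 T 0 c ltr01 c0 cg.
rewrite !mul1r add0r [c + T]addrC => ->.
have -> : \int[mu]_(x in `[0, c]) (g (1 * x + T) * 1) = \int[mu]_(x in `[0, c]) g x.
  by apply: eq_Rintegral => x _; rewrite mul1r mulr1 gT.
by rewrite [RHS](@Rintegral_itv_split g 0 c T) // addrC.
Qed.

End continuous_Rintegral_itv.

Lemma ge0_of_lbound_mul_2exp (R : archiFieldType) (K x : R) :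
  (forall n, K <= x * 2 ^+ n) -> 0 <= x.
Proof.
move=> Kx; rewrite leNgt; apply/negP => x0.
pose n := Num.bound `|K / x|.
have Kxn : K / x < n%:R := le_lt_trans (ler_norm _) (archi_boundP (normr_ge0 _)).
have n2n : n%:R <= 2 ^+ n :> R by rewrite -natrX ler_nat ltnW // ltn_expl.
have := Kx n; rewrite -[K](divfK (ltr0_neq0 x0)).
by move: Kxn n2n; set k := K / x; set m := n%:R; set p := 2 ^+ n; nra.
Qed.

Section log_circle_integral.
Context {R : realType}.
Notation mu := (@lebesgue_measure R).
Local Open Scope classical_set_scope.
Implicit Types b c r t : R.

(* [circle_quad b c t = |1 + w e^{-it}|^2] with [w = b + ic]. *)
Definition circle_quad b c t := 1 + (b ^+ 2 + c ^+ 2) + 2 * (b * cos t + c * sin t).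

Definition log_circle_integral b c := \int[mu]_(t in `[0, 2 * pi]) ln (circle_quad b c t).

(* [|1 + w e^{-it}| >= 1 - |w| >= (1 - |w|^2) / 2] *)
Lemma circle_quad_ge b c r t : b ^+ 2 + c ^+ 2 <= r -> r < 1 ->
  (1 - r) ^+ 2 / 4 <= circle_quad b c t.
Proof.
move=> wr r1; rewrite /circle_quad.
set s := b ^+ 2 + c ^+ 2 in wr *; set L := b * cos t + c * sin t.
have s0 : 0 <= s by rewrite addr_ge0 ?sqr_ge0.
have Ls : L ^+ 2 <= s.
  have trig := cos2Dsin2 t; have := sqr_ge0 (b * sin t - c * cos t).
  by rewrite /L /s; nra.
have rL : (1 - r) / 2 <= 1 + L by nra.
have -> : (1 - r) ^+ 2 / 4 = ((1 - r) / 2) ^+ 2 by field.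
by nra.
Qed.

Lemma circle_quad_gt0 b c t : b ^+ 2 + c ^+ 2 < 1 -> 0 < circle_quad b c t.
Proof.
move=> w1; apply: lt_le_trans (circle_quad_ge _ _ _ t (lexx _) w1).
by rewrite divr_gt0 // exprn_gt0 // subr_gt0.
Qed.

Lemma continuous_circle_quad b c : continuous (circle_quad b c).
Proof.
apply: continuousD_fun => [t|]; first exact: cvg_cst.
apply: continuousM_fun => [t|]; first exact: cvg_cst.
apply: continuousD_fun; apply: continuousM_fun;
  by [move=> t; exact: cvg_cst | exact: continuous_cos | exact: continuous_sin].
Qed.

Lemma continuous_ln_circle_quad b c : b ^+ 2 + c ^+ 2 < 1 ->
  continuous (fun t => ln (circle_quad b c t)).
Proof.
move=> w1 t; apply: continuous_comp; first exact: continuous_circle_quad.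
exact/continuous_ln/circle_quad_gt0.
Qed.

Lemma circle_quad_periodic b c : periodic (circle_quad b c) (2 * pi).
Proof. by move=> t; rewrite /circle_quad [2 * pi]mulr_natl cosD2pi sinD2pi. Qed.

Lemma circle_quadDpi b c t : circle_quad b c (t + pi) = circle_quad (- b) (- c) t.
Proof. by rewrite /circle_quad cosDpi sinDpi !sqrrN !mulrN !mulNr. Qed.

(* [|1 + w e^{-it}|^2 |1 - w e^{-it}|^2 = |1 - w^2 e^{-2it}|^2] *)
Lemma circle_quadMN b c t : circle_quad b c t * circle_quad (- b) (- c) t =
  circle_quad (c ^+ 2 - b ^+ 2) (- (2 * b * c)) (2 * t).
Proof.
rewrite /circle_quad (_ : 2 * t = t + t) ?cosD ?sinD; last by ring.
apply/eqP; rewrite -subr_eq0; apply/eqP.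
transitivity (- 2 * (b ^+ 2 + c ^+ 2) * (cos t ^+ 2 + sin t ^+ 2 - 1)); first by ring.
by rewrite cos2Dsin2 subrr mulr0.
Qed.

Lemma log_circle_integralN b c : b ^+ 2 + c ^+ 2 < 1 ->
  log_circle_integral (- b) (- c) = log_circle_integral b c.
Proof.
move=> w1; have pi0 := @pi_gt0 R.
have clnq := continuous_ln_circle_quad _ _ w1.
transitivity (\int[mu]_(t in `[0, 2 * pi]) (ln (circle_quad b c (1 * t + pi)) * 1)).
  by apply: eq_Rintegral => t _; rewrite mul1r mulr1 circle_quadDpi.
rewrite -(Rintegral_itv_affine (fun t => ln (circle_quad b c t))) ?mul1r ?add0r //; last by lra.
rewrite addrC; apply: Rintegral_itv_periodic => //; last by apply/andP; lra.
by move=> t /=; rewrite circle_quad_periodic.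
Qed.

Let sqr_norm_sqr_le b c : b ^+ 2 + c ^+ 2 < 1 ->
  (c ^+ 2 - b ^+ 2) ^+ 2 + (- (2 * b * c)) ^+ 2 <= b ^+ 2 + c ^+ 2.
Proof.
move=> w1; have w0 : 0 <= b ^+ 2 + c ^+ 2 by rewrite addr_ge0 ?sqr_ge0.
have -> : (c ^+ 2 - b ^+ 2) ^+ 2 + (- (2 * b * c)) ^+ 2 = (b ^+ 2 + c ^+ 2) ^+ 2 by ring.
by nra.
Qed.

Lemma log_circle_integral_sqr b c : b ^+ 2 + c ^+ 2 < 1 ->
  2 * log_circle_integral b c = log_circle_integral (c ^+ 2 - b ^+ 2) (- (2 * b * c)).
Proof.
move=> w1; have pi0 := @pi_gt0 R.
have w1N : (- b) ^+ 2 + (- c) ^+ 2 < 1 by rewrite !sqrrN.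
set h := fun t => ln (circle_quad (c ^+ 2 - b ^+ 2) (- (2 * b * c)) t).
have ch : continuous h.
  apply: continuous_ln_circle_quad; exact: le_lt_trans (sqr_norm_sqr_le _ _ w1) w1.
have sumN : log_circle_integral b c + log_circle_integral (- b) (- c) =
            \int[mu]_(t in `[0, 2 * pi]) h (2 * t + 0).
  rewrite -RintegralD //; try exact/continuous_integrable_itv/continuous_ln_circle_quad.
  apply: eq_Rintegral => t _.
  by rewrite /h addr0 -lnM ?posrE ?circle_quad_gt0 // circle_quadMN.
have dbl : (\int[mu]_(t in `[0, 2 * pi]) h (2 * t + 0)) * 2 =
           log_circle_integral (c ^+ 2 - b ^+ 2) (- (2 * b * c)) * 2.
  rewrite -RintegralZr //; last exact/continuous_integrable_itv/continuous_comp_affine.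
  rewrite -Rintegral_itv_affine // ?mulr0 ?addr0; last by lra.
  rewrite (@Rintegral_itv_split _ h 0 (2 * pi)) //; try lra.
  rewrite (_ : 2 * (2 * pi) = 2 * pi + 2 * pi); last by ring.
  rewrite Rintegral_itv_periodic //; last 2 first.
  - by move=> t; rewrite /h circle_quad_periodic.
  - by apply/andP; lra.
  by rewrite mulr_natr mulr2n.
by rewrite log_circle_integralN // in sumN; lra.
Qed.

Lemma log_circle_integral_ge b c r : b ^+ 2 + c ^+ 2 <= r -> r < 1 ->
  2 * pi * ln ((1 - r) ^+ 2 / 4) <= log_circle_integral b c.
Proof.
move=> wr r1; have pi0 := @pi_gt0 R.
rewrite -[2 * pi]subr0 -fine_lebesgue_measure_itv; last by lra.
rewrite mulrC -Rintegral_cst //; apply: le_Rintegral => //.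
- by apply: continuous_integrable_itv => x; exact: cvg_cst.
- apply/continuous_integrable_itv/continuous_ln_circle_quad.
  exact: le_lt_trans wr r1.
move=> t _; rewrite ler_ln ?posrE ?(circle_quad_ge _ _ _ _ wr r1) //.
  by rewrite divr_gt0 // exprn_gt0 // subr_gt0.
by apply: circle_quad_gt0; exact: le_lt_trans wr r1.
Qed.

Lemma log_circle_integral_mul_2exp_ge n b c r : b ^+ 2 + c ^+ 2 <= r -> r < 1 ->
  2 * pi * ln ((1 - r) ^+ 2 / 4) <= log_circle_integral b c * 2 ^+ n.
Proof.
elim: n b c => [|n IHn] b c wr r1; first by rewrite mulr1; exact: log_circle_integral_ge.
have w1 := le_lt_trans wr r1.
rewrite [2 ^+ n.+1]exprS mulrA (mulrC _ 2) log_circle_integral_sqr //.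
by apply: IHn r1; exact: le_trans (sqr_norm_sqr_le _ _ w1) wr.
Qed.

Lemma log_circle_integral_ge0 b c : b ^+ 2 + c ^+ 2 < 1 -> 0 <= log_circle_integral b c.
Proof.
move=> w1; apply: ge0_of_lbound_mul_2exp => n.
exact: (log_circle_integral_mul_2exp_ge n _ _ _ (lexx _) w1).
Qed.

End log_circle_integral.

Section ln_shifted_circle.
Context {R : realType}.
Notation mu := (@lebesgue_measure R).
Local Open Scope classical_set_scope.
Implicit Types x y P t : R.

Lemma ge1_1D_sqr_normM x y P : 0 <= P -> 1 <= 1 + (x ^+ 2 + y ^+ 2) * P.
Proof. by move=> P0; rewrite lerDl mulr_ge0 // addr_ge0 ?sqr_ge0. Qed.

(* [c] is the larger root of [c^2 - (1 + P (|z|^2 + 1)) c + P^2 |z|^2], for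
   which [1 + |z + e^{it}|^2 P = c |1 + (P z / c) e^{-it}|^2], [z = x + iy];
   the smaller root is [P^2 |z|^2 / c], hence [|P z / c| < 1]. *)
Lemma shifted_circle_factor x y P : 0 <= P ->
  exists c, [/\ 1 + (x ^+ 2 + y ^+ 2) * P <= c,
    (P * x / c) ^+ 2 + (P * y / c) ^+ 2 < 1 &
    forall t, 1 + ((x + cos t) ^+ 2 + (y + sin t) ^+ 2) * P =
              c * circle_quad (P * x / c) (P * y / c) t].
Proof.
move=> P0; set s := x ^+ 2 + y ^+ 2.
have s0 : 0 <= s by rewrite addr_ge0 ?sqr_ge0.
set A := 1 + P * (s + 1).
have discr_gt0 : 0 < A ^+ 2 - 4 * P ^+ 2 * s.
  have -> : A ^+ 2 - 4 * P ^+ 2 * s = (1 + P * s - P) ^+ 2 + 4 * P by rewrite /A; ring.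
  have [->|P_gt0] := eqVneq P 0; first by rewrite !mul0r subr0 addr0 expr1n.
  by rewrite ltr_wpDl ?sqr_ge0 // mulr_gt0 // lt0r P_gt0.
pose d := Num.sqrt (A ^+ 2 - 4 * P ^+ 2 * s).
have d0 : 0 < d by rewrite sqrtr_gt0.
have d2 : d ^+ 2 = A ^+ 2 - 4 * P ^+ 2 * s by rewrite sqr_sqrtr // ltW.
set c := (A + d) / 2.
have root_c : c ^+ 2 - A * c + P ^+ 2 * s = 0.
  have -> : c ^+ 2 - A * c + P ^+ 2 * s = (d ^+ 2 - (A ^+ 2 - 4 * P ^+ 2 * s)) / 4.
    by rewrite /c; field.
  by rewrite d2 subrr mul0r.
have sPc : 1 + s * P <= c.
  have : (1 + P * s - P) ^+ 2 <= d ^+ 2 by rewrite d2 /A; nra.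
  by rewrite /c /A; nra.
have c0 : 0 < c by apply: lt_le_trans sPc; nra.
exists c; split => //.
  have -> : (P * x / c) ^+ 2 + (P * y / c) ^+ 2 = P ^+ 2 * s / c ^+ 2.
    by rewrite /s; field; rewrite lt0r_neq0.
  rewrite ltr_pdivrMr ?exprn_gt0 // mul1r.
  have c2 : 2 * c = A + d by rewrite /c; field.
  have cd0 : 0 < c * d by rewrite mulr_gt0.
  by nra.
move=> t; apply/eqP; rewrite -subr_eq0; apply/eqP.
transitivity (- (c ^+ 2 - A * c + P ^+ 2 * s) / c +
              P * (cos t ^+ 2 + sin t ^+ 2 - 1)).
  by rewrite /circle_quad /A /s; field; rewrite lt0r_neq0.
by rewrite root_c cos2Dsin2 subrr oppr0 mul0r mulr0 addr0.
Qed.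

Lemma continuous_ln_shifted_circle x y P : 0 <= P ->
  continuous (fun t => ln (1 + ((x + cos t) ^+ 2 + (y + sin t) ^+ 2) * P)).
Proof.
move=> P0; have [c [sPc w1 fac]] := shifted_circle_factor x y P P0.
have c0 : 0 < c := lt_le_trans ltr01 (le_trans (ge1_1D_sqr_normM x y P P0) sPc).
under eq_fun do rewrite fac.
move=> t; apply: continuous_comp; last exact/continuous_ln/mulr_gt0/circle_quad_gt0.
by apply: continuousM_fun (continuous_circle_quad _ _) t => ?; exact: cvg_cst.
Qed.

Lemma circle_mean_ln_shifted_ge x y P : 0 <= P ->
  2 * pi * ln (1 + (x ^+ 2 + y ^+ 2) * P) <=
  \int[mu]_(t in `[0, 2 * pi]) ln (1 + ((x + cos t) ^+ 2 + (y + sin t) ^+ 2) * P).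
Proof.
move=> P0; have [c [sPc w1 fac]] := shifted_circle_factor x y P P0.
have sP0 := lt_le_trans ltr01 (ge1_1D_sqr_normM x y P P0).
have c0 : 0 < c := lt_le_trans sP0 sPc.
have pi0 := @pi_gt0 R.
set u := P * x / c; set v := P * y / c.
have -> : \int[mu]_(t in `[0, 2 * pi]) ln (1 + ((x + cos t) ^+ 2 + (y + sin t) ^+ 2) * P)
    = \int[mu]_(t in `[0, 2 * pi]) (ln c + ln (circle_quad u v t)).
  by apply: eq_Rintegral => t _; rewrite fac lnM ?posrE ?circle_quad_gt0.
rewrite RintegralD //; last 2 first.
- by apply: continuous_integrable_itv => t; exact: cvg_cst.
- exact/continuous_integrable_itv/continuous_ln_circle_quad.
rewrite Rintegral_cst // fine_lebesgue_measure_itv ?subr0; last by lra.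
have := log_circle_integral_ge0 _ _ w1; rewrite /log_circle_integral.
have : ln (1 + (x ^+ 2 + y ^+ 2) * P) <= ln c by rewrite ler_ln ?posrE.
by nra.
Qed.

End ln_shifted_circle.

Section Fexp_monotone.
Context {R : realType}.
Notation mu := (@lebesgue_measure R).
Local Open Scope classical_set_scope.
Variables b P : R.
Hypotheses (b1 : 1 < b) (P0 : 0 <= P).
Implicit Types x y t : R.

Let pi2_gt0 : 0 < 2 * pi :> R. Proof. by rewrite mulr_gt0 // pi_gt0. Qed.

Let mu_itv02pi : fine (mu `[0, 2 * pi]) = 2 * pi.
Proof. by rewrite fine_lebesgue_measure_itv ?subr0 // ltW. Qed.

Let mu_itv02pi_lty : (mu `[0%R, (2 * pi)%R] < +oo)%E.
Proof. by rewrite lebesgue_measure_itv; case: ifP => _; rewrite ltry. Qed.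

Lemma logb_ge0 v : 1 <= v -> 0 <= logb b v.
Proof. by move=> v1; rewrite divr_ge0 // ?ln_ge0 // ltW // ln_gt0. Qed.

Lemma ler_logb u v : 0 < u -> u <= v -> logb b u <= logb b v.
Proof.
move=> u0 uv; rewrite ler_pM2r ?invr_gt0 ?ln_gt0 // ler_ln ?posrE //.
exact: lt_le_trans uv.
Qed.

Let sqr_norm_addcs_le x y t :
  (x + cos t) ^+ 2 + (y + sin t) ^+ 2 <= 2 * (x ^+ 2 + y ^+ 2) + 2.
Proof.
have := cos2Dsin2 t; have := sqr_ge0 (x - cos t); have := sqr_ge0 (y - sin t).
by nra.
Qed.

Lemma Fexp_ge0 i x y : 0 <= Fexp b P i x y.
Proof.
elim: i x y => [|i IHi] x y /=.
  exact/logb_ge0/ge1_1D_sqr_normM.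
by rewrite mulr_ge0 ?invr_ge0 ?(ltW pi2_gt0) // Rintegral_ge0.
Qed.

Lemma Fexp_bounded i K : exists M, forall x y,
  x ^+ 2 + y ^+ 2 <= K -> Fexp b P i x y <= M.
Proof.
elim: i K => [|i IHi] K.
  exists (logb b (1 + K * P)) => x y sK /=.
  apply: ler_logb; last by rewrite lerD2l ler_wpM2r.
  exact: lt_le_trans ltr01 (ge1_1D_sqr_normM x y P P0).
have [M HM] := IHi (2 * K + 2); exists M => x y sK /=.
rewrite ler_pdivrMl // [_ * M]mulrC -[in X in _ <= X]mu_itv02pi.
apply: bounded_ge0_Rintegral_le => // [t _|t _]; first exact: Fexp_ge0.
by apply: HM; apply: le_trans (sqr_norm_addcs_le x y t) _; lra.
Qed.

Lemma Fexp_succ_le i j x y :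
  (forall x y, Fexp b P i x y <= Fexp b P j x y) ->
  Fexp b P i.+1 x y <= Fexp b P j.+1 x y.
Proof.
move=> Fij; have [M HM] := Fexp_bounded j (2 * (x ^+ 2 + y ^+ 2) + 2).
rewrite /= ler_pM2l ?invr_gt0 //.
apply: (bounded_ge0_le_Rintegral _ _ _ mu_itv02pi_lty _ _ M) => // t _.
- exact: Fexp_ge0.
- exact: HM (sqr_norm_addcs_le x y t).
Qed.

Lemma Fexp0_le_Fexp1 x y : Fexp b P 0 x y <= Fexp b P 1 x y.
Proof.
rewrite /= /logb; under eq_Rintegral do rewrite mulrC.
rewrite RintegralZl //; last exact/continuous_integrable_itv/continuous_ln_shifted_circle.
rewrite mulrCA [X in _ <= X]mulrC ler_pM2r ?invr_gt0 ?ln_gt0 // ler_pdivlMl //.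
exact: circle_mean_ln_shifted_ge.
Qed.

Lemma Fexp0_le i x y : Fexp b P 0 x y <= Fexp b P i x y.
Proof.
elim: i x y => // i IHi x y.
exact: le_trans (Fexp0_le_Fexp1 x y) (Fexp_succ_le _ _ _ _ IHi).
Qed.

Lemma Rbar1E : Rbar b P 1 = logb b (1 + P).
Proof.
rewrite /Rbar /=; under eq_Rintegral do rewrite !add0r cos2Dsin2 mul1r.
by rewrite Rintegral_cst // mu_itv02pi mulrC mulfK // gt_eqF.
Qed.

Lemma Rbar1_le k : (0 < k)%N -> Rbar b P 1 <= Rbar b P k.
Proof. by case: k => // k _; exact: (Fexp_succ_le _ _ _ _ (Fexp0_le k)). Qed.

End Fexp_monotone.

Section binomial_law.
Context {R : realType}.
Implicit Types (q pB : R) (L : nat).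

Lemma binom_pmf_ge0 L q k : 0 <= q <= 1 -> 0 <= binom_pmf L q k.
Proof. by case/andP=> q0 q1; rewrite mulr_ge0 ?mulr_ge0 ?exprn_ge0 ?subr_ge0. Qed.

Lemma sum_binom_pmf L q : \sum_(k < L.+1) binom_pmf L q k = 1.
Proof.
have <- : (1 - q + q) ^+ L = 1 by rewrite subrK expr1n.
rewrite exprDn; apply: eq_bigr => k _.
by rewrite /binom_pmf -mulr_natl; ring.
Qed.

Lemma prob_alpha_ge1E pB L : prob_alpha_ge1 pB L = 1 - pB ^+ L.
Proof.
have pmf0 : binom_pmf L (1 - pB) 0 = pB ^+ L.
  by rewrite /binom_pmf subKr bin0 subn0 expr0 mulr1 mul1r.
rewrite -(sum_binom_pmf L (1 - pB)) (bigD1 ord0) //= pmf0 addrC addrK.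
by apply: eq_bigl => k; rewrite lt0n.
Qed.

Lemma prob_alpha_ge1_le_rate (b P pB r : R) L : 0 <= pB <= 1 ->
  (forall k, (0 < k)%N -> r <= Rbar b P k) ->
  prob_alpha_ge1 pB L <= prob_rate_ge b P pB L r.
Proof.
move=> /andP[pB0 pB1] rR.
have q01 : 0 <= 1 - pB <= 1 by rewrite subr_ge0 pB1 lerBlDr lerDl.
rewrite /prob_rate_ge /prob_alpha_ge1 big_mkcond /=.
apply: ler_sum => k _; case: ifPn => [k0|_]; first by rewrite rR // mulr1.
by rewrite mulr_ge0 ?binom_pmf_ge0.
Qed.

End binomial_law.

Theorem corollary2 (R : realType) (b : R) (L : nat) (P pB : R) :
  1 < b -> (1 <= L)%N -> 0 <= P -> 0 <= pB <= 1 ->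
  ((prob_alpha_ge1 pB L * Rbar b P 1)%:E <= Rout b P pB L)%E /\
  prob_alpha_ge1 pB L * Rbar b P 1 = (1 - pB ^+ L) * logb b (1 + P).
Proof.
move=> b1 _ P0 pB01.
split; last by rewrite prob_alpha_ge1E Rbar1E.
apply: le_trans (ereal_sup_ubound _) => /=; last by exists (Rbar b P 1).
rewrite lee_fin mulrC ler_wpM2l ?prob_alpha_ge1_le_rate //.
  by rewrite Rbar1E // logb_ge0 // lerDl.
by move=> k; exact: Rbar1_le.
Qed.
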